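(* Let $G=(V,E)$ be a graph, $\mathcal{F}$ a monotone feature, and $f,g:E\to\mathbb{R}$ two filtering functions with $\sup_{e\in E}|f(e)-g(e)|\le h$ for some real $h>0$. Let $X\subseteq V\cup E$ have $\mathcal{F}$-interval $[u_1,v_1)$ in $(G,f)$ with $u_1+2h<v_1<+\infty$. Then $X$ has a non-empty $\mathcal{F}$-interval $[u_2,v_2)$ in $(G,g)$, and $|u_1-u_2|\le h$, $|v_1-v_2|\le h$.
   Context: Graphs are finite simple undirected graphs. For a filtering function $f:E\to\mathbb{R}$ and $u\in\mathbb{R}$, $G_{f,u}=(V_{f,u},E_{f,u})$ is the subgraph induced by the edge set $f^{-1}((-\infty,u])$ (vertices: endpoints of these edges); similarly $G_{g,u}$. Only subgraphs induced by edge sets are considered. A feature $\mathcal{F}$ assigns to every graph $H=(V_H,E_H)$ a function $2^{V_H\cup E_H}\to\{true,false\}$. It is monotone if (i) for any graphs $G'=(V',E')\subset G''$ and any $X\subseteq V'\cup E'$, $\mathcal{F}(X)=true$ in $G''$ implies $\mathcal{F}(X)=true$ in $G'$; and (ii) in any graph, for $Y\subset X$, $\mathcal{F}(X)=true$ implies $\mathcal{F}(Y)=true$. For monotone $\mathcal{F}$ and $X\subseteq V\cup E$ such that $\mathcal{F}(X)=true$ in $G_{f,u}$ for some $u$, the $\mathcal{F}$-interval of $X$ in $(G,f)$ is $[u_1,v_1)$, where $u_1$ is the lowest $u$ with $X\subseteq V_{f,u}\cup E_{f,u}$ and $v_1$ is the lowest $v\ge u_1$ with $\mathcal{F}(X)=false$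 in $G_{f,v}$, or $+\infty$ if there is none; it is the widest interval on which $\mathcal{F}(X)=true$ in $G_{f,w}$. The $\mathcal{F}$-interval in $(G,g)$ is defined analogously. *)

From HB Require Import structures.
From mathcomp Require Import all_boot all_order all_algebra.
From mathcomp Require Import constructive_ereal reals.
Set Implicit Arguments. Unset Strict Implicit. Unset Printing Implicit Defensive.
Import Order.TTheory GRing.Theory Num.Theory.
Local Open Scope ring_scope.

(* A finite simple undirected graph G = (V, E): a finite vertex type V, a finite
   edge type E, and an incidence map [ends] sending each edge to its set of
   endpoints, which has exactly two elements; distinct edges have distinct
   endpoint sets (no multi-edges). *)
Definition simple_graph (V E : finType) (ends : E -> {set V}) : Prop :=
  (forall e, #|ends e| = 2) /\ injective ends.

Definition verts (V E : finType) (ends : E -> {set V}) (S : {set E}) : {set V} :=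
  \bigcup_(e in S) ends e.

Definition sub_edges (R : realType) (E : finType) (f : E -> R) (u : R) : {set E} :=
  [set e | f e <= u].

(* A subset X of V ∪ E is represented as a pair (XV, XE). *)
Definition subset_of_sub (V E : finType) (ends : E -> {set V}) (S : {set E})
  (XV : {set V}) (XE : {set E}) : Prop :=
  XV \subset verts ends S /\ XE \subset S.

(* A feature, restricted to the (edge-induced) subgraphs of G:
   F S XV XE is the value of the feature, in the subgraph induced by the edge
   set S, on the set X = XV ∪ XE (only meaningful when X lies in that subgraph). *)
Definition feature (V E : finType) := {set E} -> {set V} -> {set E} -> bool.

Definition monotone (V E : finType) (ends : E -> {set V}) (F : feature V E) : Prop :=
  (forall (S1 S2 : {set E}) (XV : {set V}) (XE : {set E}),
      S1 \subset S2 -> subset_of_sub ends S1 XV XE ->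
      F S2 XV XE -> F S1 XV XE) /\
  (forall (S : {set E}) (XV YV : {set V}) (XE YE : {set E}),
      subset_of_sub ends S XV XE -> YV \subset XV -> YE \subset XE ->
      F S XV XE -> F S YV YE).

Definition least (R : realType) (P : R -> Prop) (u : R) : Prop :=
  P u /\ forall w, P w -> u <= w.

Definition F_interval (R : realType) (V E : finType) (ends : E -> {set V})
  (F : feature V E) (f : E -> R) (XV : {set V}) (XE : {set E})
  (u1 : R) (v1 : \bar R) : Prop :=
  (exists u, subset_of_sub ends (sub_edges f u) XV XE /\ F (sub_edges f u) XV XE) /\
  least (fun u => subset_of_sub ends (sub_edges f u) XV XE) u1 /\
  ((v1 = +oo%E /\ forall v, u1 <= v -> F (sub_edges f v) XV XE) \/
   (exists v : R, v1 = v%:E /\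
      least (fun v => u1 <= v /\ ~~ F (sub_edges f v) XV XE) v)).

From HB Require Import structures.
From mathcomp Require Import all_boot all_order all_algebra.
From mathcomp Require Import constructive_ereal reals boolp lra.

Set Implicit Arguments.
Unset Strict Implicit.
Unset Printing Implicit Defensive.
Import Order.TTheory GRing.Theory Num.Theory.
Local Open Scope ring_scope.

(* Since |f - g| <= h, the sublevel graph G_{f,u} sits inside G_{g,u+h} and
   G_{g,u} inside G_{f,u+h}.  Monotonicity of the feature then moves both the
   birth and the death of X by at most h when f is replaced by g.  The minima
   defining the birth and death in (G, g) exist because the sublevel graphs of g
   only change at the finitely many values g e; the assumption u1 + 2h < v1
   guarantees that X is still alive in (G, f) at u2 + h, hence born alive in
   (G, g) at u2. *)

Section Sublevels.
Variables (R : realType) (V E : finType) (ends : E -> {set V}).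

Lemma vertsS (S1 S2 : {set E}) : S1 \subset S2 -> verts ends S1 \subset verts ends S2.
Proof.
move=> S12; apply/subsetP => x /bigcupP[e eS1 xe].
by apply/bigcupP; exists e => //; apply: (subsetP S12).
Qed.

Lemma subset_of_subS (S1 S2 : {set E}) XV XE : S1 \subset S2 ->
  subset_of_sub ends S1 XV XE -> subset_of_sub ends S2 XV XE.
Proof.
move=> S12 [XV1 XE1]; split; last exact: subset_trans XE1 S12.
exact: subset_trans XV1 (vertsS S12).
Qed.

Lemma sub_edgesS (k : E -> R) u w : u <= w -> sub_edges k u \subset sub_edges k w.
Proof. by move=> uw; apply/subsetP => e; rewrite !inE => /le_trans; apply. Qed.

Lemma sub_edges_shift (f g : E -> R) (h u : R) :
  (forall e, `|f e - g e| <= h) -> sub_edges f u \subset sub_edges g (u + h).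
Proof.
move=> fg; apply/subsetP => e; rewrite !inE => fe.
by have := fg e; rewrite ler_norml => /andP[? ?]; lra.
Qed.

Lemma sub_edges_floor (k : E -> R) u : sub_edges k u != set0 ->
  exists2 e, k e <= u & sub_edges k (k e) = sub_edges k u.
Proof.
case/set0Pn => e0; rewrite inE => ke0.
case: (arg_maxP k (ke0 : [pred e | k e <= u] e0)) => e /= keu kmax.
exists e => //; apply/setP => x; rewrite !inE.
by apply/idP/idP => [/le_trans/(_ keu)//|/kmax].
Qed.

Lemma least_attained (k : E -> R) (P : R -> Prop) w :
  (forall u, P u -> exists2 e, k e <= u & P (k e)) -> P w -> exists u, least P u.
Proof.
move=> attained /attained[e0 _ Pe0].
have Pe0b : [pred e | `[< P (k e) >]] e0 by apply/asboolP.
case: (arg_minP k Pe0b) => e /asboolP Pe kmin.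
exists (k e); split => // u /attained[x kxu /asboolP/kmin kex].
exact: le_trans kex kxu.
Qed.

End Sublevels.

Section Intervals.
Variables (R : realType) (V E : finType) (ends : E -> {set V}) (F : feature V E).
Variables (XV : {set V}) (XE : {set E}).

Definition born (k : E -> R) (u : R) := subset_of_sub ends (sub_edges k u) XV XE.

Definition dead (k : E -> R) (b u : R) := b <= u /\ ~~ F (sub_edges k u) XV XE.

Hypothesis F_sub : forall {S1 S2 : {set E}} {YV : {set V}} {YE : {set E}},
  S1 \subset S2 -> subset_of_sub ends S1 YV YE -> F S2 YV YE -> F S1 YV YE.

Lemma bornW (k : E -> R) u w : u <= w -> born k u -> born k w.
Proof. by move=> uw; apply: subset_of_subS (sub_edgesS k uw). Qed.

Lemma born_shift (f g : E -> R) h u :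
  (forall e, `|f e - g e| <= h) -> born f u -> born g (u + h).
Proof. by move=> fg; apply: subset_of_subS (sub_edges_shift u fg). Qed.

(* An X contained in the empty graph would be born at every u. *)
Lemma born_nonempty (k l : E -> R) b u :
  least (born k) b -> born l u -> sub_edges l u != set0.
Proof.
move=> [_ bmin] bu; apply/negP => /eqP l0.
have : born k (b - 1).
  by move: bu; rewrite /born l0; apply: subset_of_subS; apply: sub0set.
by move/bmin; lra.
Qed.

Lemma least_born_shift (f g : E -> R) h u1 :
  (forall e, `|f e - g e| <= h) -> least (born f) u1 ->
  exists2 u2, least (born g) u2 & `|u1 - u2| <= h.
Proof.
move=> fg bf; case: (bf) => bu1 u1min; have gf e : `|g e - f e| <= h by rewrite distrC.
have [u2 [bu2 u2min]] : exists u2, least (born g) u2.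
  apply: (least_attained (k := g) (w := u1 + h)); last exact: born_shift.
  move=> u bu; have [e keu eq_u] := sub_edges_floor (born_nonempty bf bu).
  by exists e => //; rewrite /born eq_u.
exists u2 => //; rewrite ler_norml.
have := u2min _ (born_shift fg bu1); have := u1min _ (born_shift gf bu2).
by move=> ? ?; apply/andP; split; lra.
Qed.

Lemma dead_shift (f g : E -> R) h b c v : (forall e, `|f e - g e| <= h) ->
  born f b -> c <= b + h -> dead f b v -> dead g c (v + h).
Proof.
move=> fg bb cb [bv nFv]; split; first lra.
apply: contra nFv; apply: F_sub (sub_edges_shift v fg) _.
exact: bornW bv bb.
Qed.

Lemma least_dead_shift (f g : E -> R) h u1 u2 v1 :
  (forall e, `|f e - g e| <= h) -> least (born f) u1 -> least (born g) u2 ->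
  `|u1 - u2| <= h -> least (dead f u1) v1 ->
  exists2 v2, least (dead g u2) v2 & `|v1 - v2| <= h.
Proof.
move=> fg [bu1 _] bg; case: (bg) => bu2 u2min.
rewrite ler_norml => /andP[? ?] [dv1 v1min].
have gf e : `|g e - f e| <= h by rewrite distrC.
have [v2 [dv2 v2min]] : exists v2, least (dead g u2) v2.
  apply: (least_attained (k := g) (w := v1 + h)); last by apply: dead_shift dv1 => //; lra.
  move=> x [u2x nFx]; have bx := bornW u2x bu2.
  have [e kex eq_x] := sub_edges_floor (born_nonempty bg bx).
  exists e => //; split; last by rewrite eq_x.
  by apply: u2min; rewrite /born eq_x.
exists v2 => //; rewrite ler_norml.
have := v2min _ (dead_shift fg bu1 _ dv1); have := v1min _ (dead_shift gf bu2 _ dv2).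
by move=> ? ?; apply/andP; split; lra.
Qed.

Lemma alive_before_death (k : E -> R) b v x :
  least (dead k b) v -> b <= x -> x < v -> F (sub_edges k x) XV XE.
Proof. by move=> [_ vmin] bx xv; apply/negPn/negP => nF; have := vmin x (conj bx nF); lra. Qed.

End Intervals.

Theorem lemma3 (R : realType) (V E : finType) (ends : E -> {set V})
  (F : feature V E) (f g : E -> R) (h : R)
  (XV : {set V}) (XE : {set E}) (u1 v1 : R) :
  simple_graph ends -> monotone ends F ->
  0 < h -> (forall e, `|f e - g e| <= h) ->
  F_interval ends F f XV XE u1 v1%:E -> u1 + 2 * h < v1 ->
  exists (u2 : R) (v2 : \bar R),
    F_interval ends F g XV XE u2 v2 /\ (u2%:E < v2)%E /\
    `|u1 - u2| <= h /\ (`|v1%:E - v2| <= h%:E)%E.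
Proof.
move=> _ [F_sub _] _ fg [_ [bu1 [[//]|[v [[<-] dv1]]]]] v1_late.
have gf e : `|g e - f e| <= h by rewrite distrC.
have [u2 bu2 u12] := least_born_shift fg bu1.
have [v2 dv2 v12] := least_dead_shift F_sub fg bu1 bu2 u12 dv1.
move: (u12) (v12); rewrite !ler_norml => /andP[? ?] /andP[? ?].
have Fu2 : F (sub_edges g u2) XV XE.
  apply: F_sub (sub_edges_shift u2 gf) bu2.1 _.
  by apply: alive_before_death dv1 _ _; lra.
exists u2, v2%:E; split.
  split; first by exists u2; split; first exact: bu2.1.
  by split => //; right; exists v2.
by rewrite lte_fin -EFinB abse_EFin !lee_fin ler_norml; do !split => //; lra.
Qed.
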